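(* Let $0\le r\le n$ and $0\le s\le\min(r,n-r)$, and let $\lambda$ be the kernel of $\Lambda_s^{r,s}$ (so $\lambda$ is a function on $\{0,1,\dots,s\}$). Then for $0\le k\le s$, $$\lambda(k)=(-1)^k\frac{(r-s+1)_k}{[n-r]_k}\,\lambda(0).$$
   Context: Let $\Omega$ be a finite set with $|\Omega|=n\ge1$, $G=S(\Omega)$, $X=\mathcal P(\Omega)$, $X_r=\{x\in X:|x|=r\}$, with $G$ acting on $L^2(X)$ (complex functions on $X$; $L^2(X_r)$ = functions supported on $X_r$) by $(\rho(g)\psi)(x)=\psi(g^{-1}x)$. For $0\le s\le\min(r,n-r)$, $L^2(X_r)_s$ denotes the unique irreducible $G$-subspace of $L^2(X_r)$ isomorphic to the irreducible representation of $G$ associated with the partition $(n-s,s)$ ($L^2(X_r)$ is multiplicity free and contains exactly these). For $0\le r_1,r_2\le n$, $0\le s\le\min(r_1,n-r_1,r_2,n-r_2)$, $\Lambda_s^{r_1,r_2}$ is a nonzero $G$-equivariant map $L^2(X)\to L^2(X)$ sending $L^2(X_{r_1})_s$ into $L^2(X_{r_2})_s$ and vanishing on its orthogonal complement. Its kernel is the function $\lambda$ on integers $k$ with $\max(0,r_2-r_1)\le k\le\min(n-r_1,r_2)$ such that $(\Lambda_s^{r_1,r_2}\psi)(x_2)=\sum_{x_1\in X_{r_1}}\lambda(|x_2\setminus x_1|)\psi(x_1)$ for $\psi\in L^2(X_{r_1})$, $x_2\in X_{r_2}$. Notation: $[\alpha]_k=\alpha(\alpha-1)\cdots(\alpha-k+1)$,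 $(\alpha)_k=\alpha(\alpha+1)\cdots(\alpha+k-1)$, with $[\alpha]_0=(\alpha)_0=1$. *)

From mathcomp Require Import all_boot all_algebra all_fingroup.
From mathcomp Require Import algC.
Set Implicit Arguments.
Unset Strict Implicit.
Unset Printing Implicit Defensive.
Import GRing.Theory.
Local Open Scope ring_scope.

(* Omega = 'I_n, X = P(Omega) = {set 'I_n}, G = S(Omega) = {perm 'I_n}.      *)
Definition L2 (n : nat) := {ffun {set 'I_n} -> algC^o}.

Definition rho n (g : {perm 'I_n}) (psi : L2 n) : L2 n :=
  [ffun x : {set 'I_n} => psi ((g^-1)%g @: x)].

Definition dotL2 n (f g : L2 n) : algC := \sum_x f x * (g x)^*.

(* psi belongs to L^2(X_r): supported on the r-subsets *)
Definition supported_on n (r : nat) (psi : L2 n) : Prop :=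
  forall x : {set 'I_n}, #|x| != r -> psi x = 0.

Definition deltaX n (y : {set 'I_n}) : L2 n := [ffun x : {set 'I_n} => (x == y)%:R].

(* Polytabloid of the two-row tableau with columns (a i, b i), i < s,
   (top entries a i, bottom entries b i, the remaining n - 2s entries in the
   top row), in the permutation module M^{(n-s,s)}, identified G-equivariantly
   with L^2(X_s) via (tabloid) |-> delta_{set of entries of the second row}:
   e_t = sum over the column group C_t of sgn(sigma) {sigma t}. *)
Definition polytabloid n s (a b : {ffun 'I_s -> 'I_n}) : L2 n :=
  \sum_(E : {set 'I_s}) (-1) ^+ #|E| *:
     deltaX [set (if i \in E then a i else b i) | i : 'I_s].

Definition valid_columns n s (a b : {ffun 'I_s -> 'I_n}) : bool :=
  [&& injectiveb a, injectiveb b & [forall i, forall j, a i != b j]].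

Definition specht n s : {vspace L2 n} :=
  <<[seq polytabloid ab.1 ab.2 |
       ab <- enum [pred ab : {ffun 'I_s -> 'I_n} * {ffun 'I_s -> 'I_n}
                  | valid_columns ab.1 ab.2]]>>%VS.

Definition G_invariant n (V : {vspace L2 n}) : Prop :=
  forall (g : {perm 'I_n}) v, v \in V -> rho g v \in V.

Definition iso_to_partition_rep n s (V : {vspace L2 n}) : Prop :=
  exists T : 'End(L2 n),
    [/\ (T @: V)%VS = specht n s,
        (V :&: lker T)%VS = 0%VS &
        forall (g : {perm 'I_n}) v, v \in V -> T (rho g v) = rho g (T v)].

(* V is "L^2(X_r)_s": a G-subspace of L^2(X_r) isomorphic to the irreducible
   representation of G associated with (n-s,s) (it is unique, by the
   multiplicity-freeness of L^2(X_r)). *)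
Definition is_isotypic_component n r s (V : {vspace L2 n}) : Prop :=
  [/\ forall v, v \in V -> supported_on r v,
      G_invariant V &
      iso_to_partition_rep s V].

Definition rising_factorial (a k : nat) : nat := \prod_(i < k) (a + i).

(* Fix an r-set x1 and let f := Lam (deltaX x1).  Since Lam kills the
   orthogonal complement of L^2(X_r)_s and maps L^2(X_r)_s into L^2(X_s)_s,
   f lies in L^2(X_s)_s, and f x2 = lambda |x2 \ x1| on s-sets.
   The operator (down h)(y) = sum_{z notin y} h (z |: y) kills L^2(X_s)_s:
   via the isomorphism with the Specht module it suffices to treat a preimage u
   of a polytabloid e_t, and the column antisymmetrizer kappa_t of t satisfies
   kappa_t u = 2^s u (because kappa_t e_t = 2^s e_t) and commutes with down,
   while kappa_t h vanishes on sets with fewer than s points, as some column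
   swap fixes such a set.  Evaluating down f = 0 at an (s-1)-set y with
   |y \ x1| = k gives (r-s+1+k) lambda(k) + (n-r-k) lambda(k+1) = 0, and the
   formula follows by induction on k. *)

From HB Require Import structures.
From mathcomp Require Import all_boot all_algebra all_fingroup.
From mathcomp Require Import algC zify ring.
Import GRing.Theory Num.Theory.
Local Open Scope ring_scope.
Set Implicit Arguments.
Unset Strict Implicit.

Lemma dotL2_sumr n (f : L2 n) I (r : seq I) (P : pred I) (c : I -> algC) (g : I -> L2 n) :
  dotL2 f (\sum_(i <- r | P i) c i *: g i) = \sum_(i <- r | P i) (c i)^* * dotL2 f (g i).
Proof.
rewrite /dotL2; under eq_bigr => x _ do rewrite sum_ffunE rmorph_sum mulr_sumr.
rewrite exchange_big /=; apply: eq_bigr => i _; rewrite mulr_sumr.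
by apply: eq_bigr => x _; rewrite ffunE rmorphM /= mulrCA.
Qed.

Lemma dotL2_self_eq0 n (f : L2 n) : dotL2 f f = 0 -> f = 0.
Proof.
move=> /eqP; rewrite /dotL2 psumr_eq0 => [/allP f0|x _]; last exact: mul_conjC_ge0.
apply/ffunP => x; rewrite ffunE; apply/eqP.
by rewrite -mul_conjC_eq0; apply: f0; rewrite mem_index_enum.
Qed.

(* The kernel K of u |-> (dotL2 u B_i)_i, for a basis B of V, is orthogonal
   to V, meets V trivially and has codimension at most dim V. *)
Lemma orthogonal_decomposition n (V : {vspace L2 n}) (psi : L2 n) :
  exists2 p, p \in V & forall v, v \in V -> dotL2 (psi - p) v = 0.
Proof.
pose B := vbasis V.
pose f (u : L2 n) : 'rV[algC]_(\dim V) := \row_i dotL2 u B`_i.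
have f_linear : linear f.
  move=> c u v; apply/rowP => i; rewrite !mxE /dotL2 mulr_sumr -big_split.
  by apply: eq_bigr => x _; rewrite !ffunE mulrDl mulrA.
pose fL : {linear _ -> _} := HB.pack f (GRing.isLinear.Build _ _ _ _ f f_linear).
pose K := lker (linfun fL).
have K_orth u : u \in K -> forall v, v \in V -> dotL2 u v = 0.
  rewrite memv_ker lfunE => /eqP fu0 v Vv.
  rewrite (coord_vbasis Vv) dotL2_sumr big1 // => i _.
  by have := congr1 (fun M : 'rV_ _ => M 0 i) fu0; rewrite !mxE /= => ->; rewrite mulr0.
have VK0 : (V :&: K = 0)%VS.
  apply/eqP; rewrite -subv0; apply/subvP => u /memv_capP [Vu Ku].
  by rewrite memv0; apply/eqP/dotL2_self_eq0/K_orth.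
have VK_full : (V + K)%VS = fullv.
  apply/eqP; rewrite eqEdim subvf /= dimv_disjoint_sum //.
  have := limg_ker_dim (linfun fL) fullv; rewrite capfv => <-.
  rewrite addnC leq_add2r (leq_trans (dimvS (subvf _))) //.
  by rewrite dimvf /dim /= mul1n.
have : psi \in (V + K)%VS by rewrite VK_full memvf.
case/memv_addP => p Vp [q Kq ->]; exists p => // v Vv.
by rewrite addrC addKr; apply: K_orth.
Qed.

Lemma rho_is_linear n (g : {perm 'I_n}) : linear (rho g).
Proof. by move=> c u v; apply/ffunP => x; rewrite !ffunE. Qed.

HB.instance Definition _ n (g : {perm 'I_n}) :=
  GRing.isLinear.Build algC (L2 n) (L2 n) _ (rho g) (rho_is_linear g).

Lemma rho_deltaX n (g : {perm 'I_n}) y : rho g (deltaX y) = deltaX (g @: y).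
Proof.
apply/ffunP => x; rewrite !ffunE.
suff -> : (g^-1%g @: x == y) = (x == g @: y) by [].
by apply/eqP/eqP => [<- | ->]; rewrite -imset_comp;
  rewrite ?(eq_imset _ (permKV g)) ?(eq_imset _ (permK g)) imset_id.
Qed.

Definition down n (h : L2 n) : L2 n :=
  [ffun y : {set 'I_n} => \sum_(z | z \notin y) h (z |: y)].

Lemma down_is_linear n : linear (@down n).
Proof.
move=> c u v; apply/ffunP => y; rewrite !ffunE scaler_sumr -big_split.
by apply: eq_bigr => z _; rewrite !ffunE.
Qed.

HB.instance Definition _ n :=
  GRing.isLinear.Build algC (L2 n) (L2 n) _ (@down n) (@down_is_linear n).

Lemma down_rho n (g : {perm 'I_n}) h : down (rho g h) = rho g (down h).
Proof.
apply/ffunP => y; rewrite !ffunE [RHS](reindex_inj (@perm_inj _ g^-1)) /=.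
apply: eq_big => [z | z _]; first by rewrite mem_imset //; apply: perm_inj.
by rewrite ffunE imsetU1.
Qed.

Definition symd (I : finType) (E F : {set I}) := (E :\: F) :|: (F :\: E).

Section SymmetricDifference.
Variable I : finType.
Implicit Types E F : {set I}.

Lemma in_symd E F i : (i \in symd E F) = ((i \in E) != (i \in F)).
Proof. by rewrite !inE; case: (i \in E); case: (i \in F). Qed.

Lemma symdC E F : symd E F = symd F E.
Proof. by apply/setP => i; rewrite !in_symd; case: (i \in E); case: (i \in F). Qed.

Lemma symdK E : involutive (symd E).
Proof. by move=> F; apply/setP => i; rewrite !in_symd; case: (i \in E); case: (i \in F). Qed.

Lemma symdd E : symd E E = set0.
Proof. by apply/setP => i; rewrite in_symd inE eqxx. Qed.

Lemma sign_symd E F : (-1) ^+ #|symd E F| = (-1) ^+ #|E| * (-1) ^+ #|F| :> algC.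
Proof.
rewrite /symd cardsU.
have -> : (E :\: F) :&: (F :\: E) = set0.
  by apply/setP => i; rewrite !inE; case: (i \in E); case: (i \in F).
rewrite cards0 subn0 -(cardsID F E) -(cardsID E F) setIC.
by rewrite !exprD mulrACA -expr2 sqrr_sign mul1r.
Qed.

End SymmetricDifference.

Section ColumnSwaps.
Variables (n s : nat) (a b : {ffun 'I_s -> 'I_n}).
Hypotheses (a_inj : injective a) (b_inj : injective b) (ab_neq : forall i j, a i != b j).

(* Exchanges the two entries a i, b i of every column i in E. *)
Definition colswap_fun (E : {set 'I_s}) (z : 'I_n) : 'I_n :=
  if [pick i | (a i == z) || (b i == z)] is Some i then
    (if i \in E then (if a i == z then b i else a i) else z)
  else z.

Lemma colswap_fun_a E i : colswap_fun E (a i) = if i \in E then b i else a i.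
Proof.
rewrite /colswap_fun; case: pickP => [j /orP [/eqP/a_inj -> | /eqP bja] | /(_ i)].
- by rewrite eqxx.
- by have := ab_neq i j; rewrite bja eqxx.
by rewrite eqxx.
Qed.

Lemma colswap_fun_b E i : colswap_fun E (b i) = if i \in E then a i else b i.
Proof.
rewrite /colswap_fun; case: pickP => [j /orP [/eqP ajb | /eqP/b_inj ->] | /(_ i)].
- by have := ab_neq j i; rewrite ajb eqxx.
- by rewrite (negbTE (ab_neq i i)).
by rewrite eqxx orbT.
Qed.

Lemma colswap_fun_out E z : (forall i, (a i != z) && (b i != z)) -> colswap_fun E z = z.
Proof.
move=> z_out; rewrite /colswap_fun; case: pickP => // i.
by have := z_out i; case: (a i == z); case: (b i == z).
Qed.

Lemma colswap_fun_comp E F z :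
  colswap_fun E (colswap_fun F z) = colswap_fun (symd E F) z.
Proof.
case: (pickP (fun i => (a i == z) || (b i == z))) => [i /orP [] /eqP <- | z_out].
- rewrite !colswap_fun_a in_symd.
  by case: (i \in F); rewrite ?colswap_fun_a ?colswap_fun_b; case: (i \in E).
- rewrite !colswap_fun_b in_symd.
  by case: (i \in F); rewrite ?colswap_fun_a ?colswap_fun_b; case: (i \in E).
have {}z_out i : (a i != z) && (b i != z) by rewrite -negb_or z_out.
by rewrite !colswap_fun_out.
Qed.

Lemma colswap_funK E : involutive (colswap_fun E).
Proof.
move=> z; rewrite colswap_fun_comp symdd /colswap_fun.
by case: pickP => // i _; rewrite inE.
Qed.

Definition colswap E : {perm 'I_n} := perm (inv_inj (colswap_funK E)).

Lemma colswapE E z : colswap E z = colswap_fun E z.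
Proof. by rewrite permE. Qed.

Lemma colswapV E : (colswap E)^-1%g = colswap E.
Proof.
apply/permP => z; apply: (@perm_inj _ (colswap E)).
by rewrite permKV !colswapE colswap_funK.
Qed.

Lemma colswap_symd E F z : colswap (symd E F) z = colswap E (colswap F z).
Proof. by rewrite !colswapE colswap_fun_comp. Qed.

Definition col_antisym (h : L2 n) : L2 n :=
  \sum_(E : {set 'I_s}) (-1) ^+ #|E| *: rho (colswap E) h.

Lemma col_antisymE h y :
  col_antisym h y = \sum_(E : {set 'I_s}) (-1) ^+ #|E| * h (colswap E @: y).
Proof. by rewrite sum_ffunE; apply: eq_bigr => E _; rewrite !ffunE colswapV. Qed.

(* Pigeonhole: a set containing exactly one entry of each column has s elements. *)
Lemma small_set_column (y : {set 'I_n}) :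
  (#|y| < s)%N -> exists i, (a i \in y) = (b i \in y).
Proof.
move=> y_small; suff /existsP [i /eqP] : [exists i, (a i \in y) == (b i \in y)] by exists i.
apply: contraLR y_small => /existsPn split_cols.
pose c i := if a i \in y then a i else b i.
have c_inj : injective c.
  move=> i j; rewrite /c; case: ifP; case: ifP => _ _;
    by [move/a_inj | move/b_inj | move=> cij; have := ab_neq i j; rewrite cij eqxx
       | move=> cij; have := ab_neq j i; rewrite cij eqxx].
rewrite -leqNgt -{1}[s]card_ord -(card_imset _ c_inj).
apply/subset_leq_card/subsetP => _ /imsetP [i _ ->]; rewrite /c.
by have := split_cols i; case: ifP => //; case: (b i \in y).
Qed.

Lemma colswap1_fix (y : {set 'I_n}) i :
  (a i \in y) = (b i \in y) -> colswap [set i] @: y = y.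
Proof.
move=> ab_y; apply/eqP; rewrite eqEcard card_imset ?leqnn ?andbT; last exact: perm_inj.
apply/subsetP => _ /imsetP [z yz ->]; rewrite colswapE.
case: (pickP (fun j => (a j == z) || (b j == z))) => [j /orP [] /eqP zE | z_out].
- by subst z; rewrite colswap_fun_a inE; case: eqP => [ji | _] //; subst j; rewrite -ab_y.
- by subst z; rewrite colswap_fun_b inE; case: eqP => [ji | _] //; subst j; rewrite ab_y.
by rewrite colswap_fun_out // => j; rewrite -negb_or z_out.
Qed.

Lemma col_antisym_small h (y : {set 'I_n}) : (#|y| < s)%N -> col_antisym h y = 0.
Proof.
move=> /small_set_column [i /colswap1_fix fix_y].
have : col_antisym h y = - col_antisym h y.
  rewrite {1}col_antisymE (reindex_inj (can_inj (symdK [set i]))) /=.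
  rewrite col_antisymE -sumrN; apply: eq_bigr => E _.
  rewrite sign_symd cards1 expr1 mulN1r mulNr; congr (- (_ * h _)).
  by rewrite symdC -{2}fix_y -imset_comp; apply: eq_imset => z; rewrite /= colswap_symd.
by move/eqP; rewrite -subr_eq0 opprK -mulr2n mulrn_eq0 => /eqP.
Qed.

Definition colset (F : {set 'I_s}) := [set (if i \in F then a i else b i) | i : 'I_s].

Lemma colswap_colset E F : colswap E @: colset F = colset (symd E F).
Proof.
rewrite -imset_comp; apply: eq_imset => i /=; rewrite colswapE in_symd.
by case: (i \in F); rewrite ?colswap_fun_a ?colswap_fun_b; case: (i \in E).
Qed.

Lemma rho_colswap_polytabloid E :
  rho (colswap E) (polytabloid a b) = (-1) ^+ #|E| *: polytabloid a b.
Proof.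
rewrite linear_sum scaler_sumr (reindex_inj (can_inj (symdK E))) /=.
apply: eq_bigr => F _; rewrite linearZ /= rho_deltaX colswap_colset symdK.
by rewrite scalerA sign_symd.
Qed.

Lemma col_antisym_polytabloid :
  col_antisym (polytabloid a b) = #|{set 'I_s}|%:R *: polytabloid a b.
Proof.
rewrite /col_antisym (eq_bigr (fun=> polytabloid a b)) ?sumr_const ?scaler_nat // => E _.
by rewrite rho_colswap_polytabloid scalerA -expr2 sqrr_sign scale1r.
Qed.

Lemma down_col_antisym h : down (col_antisym h) = col_antisym (down h).
Proof. by rewrite linear_sum; apply: eq_bigr => E _; rewrite linearZ /= down_rho. Qed.

End ColumnSwaps.

Lemma lker_cap0_inj_in (K : fieldType) (vT wT : vectType K)
    (W : {vspace vT}) (T : 'Hom(vT, wT)) :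
  (W :&: lker T = 0)%VS -> {in W &, injective T}.
Proof.
move=> WT0 u v Wu Wv Tuv; apply/eqP; rewrite -subr_eq0 -memv0 -WT0 memv_cap memvB //=.
by rewrite memv_ker linearB /= Tuv subrr.
Qed.

Lemma lfun_eq0_on_span_preimages (K : fieldType) (vT wT uT : vectType K)
    (W : {vspace vT}) (T : 'Hom(vT, wT)) (f : 'Hom(vT, uT)) (X : seq wT) :
  (W :&: lker T = 0)%VS -> (T @: W)%VS = <<X>>%VS ->
  {in W, forall u, T u \in X -> f u = 0} -> (W <= lker f)%VS.
Proof.
move=> WT0 TW f0; apply/capv_idPl/eqP; rewrite eqEdim capvSl /=.
have WfT0 : (W :&: lker f :&: lker T = 0)%VS.
  by apply/eqP; rewrite -subv0 -WT0 capvS ?capvSl.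
have X_img : (<<X>> <= T @: (W :&: lker f))%VS.
  apply/span_subvP => x Xx.
  have /memv_imgP [u Wu xE] : x \in (T @: W)%VS by rewrite TW memv_span.
  by rewrite xE memv_img // memv_cap Wu memv_ker f0 -?xE ?eqxx.
by have := dimvS X_img; rewrite -TW !limg_dim_eq.
Qed.

Lemma down_polytabloid_preimage n s (Ws : {vspace L2 n}) (T : 'End(L2 n))
    (a b : {ffun 'I_s -> 'I_n}) (u : L2 n) :
  (forall v, v \in Ws -> supported_on s v) -> G_invariant Ws ->
  (Ws :&: lker T = 0)%VS ->
  (forall (g : {perm 'I_n}) v, v \in Ws -> T (rho g v) = rho g (T v)) ->
  valid_columns a b -> u \in Ws -> T u = polytabloid a b -> down u = 0.
Proof.
move=> supp Ginv WT0 Teq /and3P [/injectiveP a_inj /injectiveP b_inj /forallP ab] Wu Tu.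
have ab_neq i j : a i != b j := forallP (ab i) j.
pose A := col_antisym a_inj b_inj ab_neq.
pose c : algC := #|{set 'I_s}|%:R.
have c_neq0 : c != 0.
  by rewrite pnatr_eq0 -lt0n; apply/card_gt0P; exists set0.
have Au : A u = c *: u.
  apply: (lker_cap0_inj_in WT0); rewrite ?memvZ //.
    by apply: memv_suml => E _; apply/memvZ/Ginv.
  rewrite linear_sum linearZ /= Tu -col_antisym_polytabloid -Tu.
  by apply: eq_bigr => E _; rewrite linearZ /= Teq.
apply/ffunP => y; rewrite [RHS]ffunE; case: (ltnP #|y| s) => [y_small | y_large].
  apply: (mulfI c_neq0).
  rewrite mulr0 -(col_antisym_small a_inj b_inj ab_neq (down u) y_small).
  by rewrite -down_col_antisym -/A Au linearZ [RHS]ffunE.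
rewrite ffunE big1 // => z zy; apply: (supp _ Wu).
by rewrite cardsU1 zy neq_ltn ltnS y_large orbT.
Qed.

Lemma down_isotypic_eq0 n s (Ws : {vspace L2 n}) v :
  is_isotypic_component s s Ws -> v \in Ws -> down v = 0.
Proof.
move=> [supp Ginv [T [TW WT0 Teq]]] Wv.
have : (Ws <= lker (linfun (@down n)))%VS.
  apply: (lfun_eq0_on_span_preimages WT0 TW) => u Wu /mapP [[a b]].
  rewrite mem_enum lfunE => ab_valid Tu.
  exact: (down_polytabloid_preimage supp Ginv WT0 Teq ab_valid Wu Tu).
by move/subvP/(_ v Wv); rewrite memv_ker lfunE => /eqP.
Qed.

Lemma mem_img_of_orth_ker n (V W : {vspace L2 n}) (L : 'End(L2 n)) psi :
  (L @: V <= W)%VS ->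
  (forall phi, (forall v, v \in V -> dotL2 phi v = 0) -> L phi = 0) ->
  L psi \in W.
Proof.
move=> LVW L_orth; have [p Vp p_orth] := orthogonal_decomposition V psi.
rewrite -(subrK p psi) linearD /= L_orth // add0r.
by apply: (subvP LVW); apply: memv_img.
Qed.

Lemma down_kernel_eval n (f : L2 n) (x1 y : {set 'I_n}) (lam : nat -> algC) :
  (forall x2 : {set 'I_n}, #|x2| = #|y|.+1 -> f x2 = lam #|x2 :\: x1|) ->
  down f y = lam #|y :\: x1| *+ #|x1 :\: y| + lam #|y :\: x1|.+1 *+ #|~: (x1 :|: y)|.
Proof.
move=> f_lam; rewrite ffunE (bigID (mem x1)) /= -!sumr_const.
have card_zy z : z \notin y -> #|z |: y| = #|y|.+1 by move=> zy; rewrite cardsU1 zy.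
congr (_ + _); apply: eq_big => [z | z /andP [zy zx1]]; rewrite ?inE.
- by rewrite andbC.
- rewrite f_lam ?card_zy //; congr (lam #|_|).
  rewrite setDUl (_ : [set z] :\: x1 = set0) ?set0U //.
  by apply/eqP; rewrite setD_eq0 sub1set.
- by rewrite negb_or andbC.
rewrite f_lam ?card_zy //; congr lam.
have -> : (z |: y) :\: x1 = z |: (y :\: x1).
  by apply/setP => t; rewrite !inE; case: eqP => // ->; rewrite (negbTE zx1).
by rewrite cardsU1 inE (negbTE zy) andbF.
Qed.

Lemma exists_subset_card (T : finType) (A : {set T}) m :
  (m <= #|A|)%N -> exists2 B : {set T}, B \subset A & #|B| = m.
Proof.
elim: m => [|m IHm] m_le; first by exists set0; rewrite ?sub0set ?cards0.
have [B BA cardB] := IHm (ltnW m_le).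
have : (0 < #|A :\: B|)%N by rewrite cardsD (setIidPr BA) cardB subn_gt0.
case/card_gt0P => z; rewrite inE => /andP [zB zA].
by exists (z |: B); rewrite ?subUset ?sub1set ?zA ?BA // cardsU1 zB cardB.
Qed.

Lemma kernel_recurrence n r s (Vr Ws : {vspace L2 n}) (Lam : 'End(L2 n))
    (lambda : nat -> algC) k :
  (r <= n)%N -> (s <= minn r (n - r))%N -> is_isotypic_component s s Ws ->
  (Lam @: Vr <= Ws)%VS ->
  (forall psi, (forall v, v \in Vr -> dotL2 psi v = 0) -> Lam psi = 0) ->
  (forall psi, supported_on r psi ->
     forall x2 : {set 'I_n}, #|x2| = s ->
       Lam psi x2 = \sum_(x1 : {set 'I_n} | #|x1| == r)
                       lambda #|x2 :\: x1| * psi x1) ->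
  (k < s)%N ->
  lambda k * (r - s + 1 + k)%:R + lambda k.+1 * (n - r - k)%:R = 0.
Proof.
rewrite leq_min => r_le_n /andP [s_le_r s_le_nr] Ws_iso LVW L_orth L_kernel k_lt_s.
have [x1 _ card_x1] : exists2 x1 : {set 'I_n}, x1 \subset setT & #|x1| = r.
  by apply: exists_subset_card; rewrite cardsT card_ord.
have [Y1 Y1_x1 card_Y1] : exists2 Y1 : {set 'I_n}, Y1 \subset x1 & #|Y1| = (s - k.+1)%N.
  by apply: exists_subset_card; rewrite card_x1; lia.
have [Y2 Y2_x1' card_Y2] : exists2 Y2 : {set 'I_n}, Y2 \subset ~: x1 & #|Y2| = k.
  by apply: exists_subset_card; rewrite cardsCs setCK card_ord card_x1; lia.
have Y2_x1 : [disjoint Y2 & x1] by rewrite disjoints_subset.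
have Y1Y2_disj : [disjoint Y1 & Y2] by rewrite (disjointWl Y1_x1) // disjoint_sym.
pose y := Y1 :|: Y2.
have card_y : #|y|.+1 = s.
  by rewrite cardsU (disjoint_setI0 Y1Y2_disj) cards0 subn0 card_Y1 card_Y2; lia.
have y_x1 : y :\: x1 = Y2.
  rewrite setDUl (setDidPl Y2_x1) (_ : Y1 :\: x1 = set0) ?set0U //.
  by apply/eqP; rewrite setD_eq0.
pose f := Lam (deltaX x1).
have f_lam (x2 : {set 'I_n}) : #|x2| = #|y|.+1 -> f x2 = lambda #|x2 :\: x1|.
  rewrite card_y => card_x2; rewrite L_kernel //; last first.
    by move=> x x_r; rewrite ffunE; case: (x =P x1) x_r => [-> | _ _]; rewrite ?card_x1 ?eqxx.
  rewrite (bigD1 x1) ?card_x1 //= ffunE eqxx mulr1 big1 ?addr0 // => x /andP [_ x_x1].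
  by rewrite ffunE (negbTE x_x1) mulr0.
have := down_isotypic_eq0 Ws_iso (mem_img_of_orth_ker (deltaX x1) LVW L_orth).
move/(congr1 (fun h : L2 n => h y)); rewrite (down_kernel_eval f_lam) ffunE y_x1 card_Y2.
have x1_y : x1 :&: y = Y1.
  by rewrite setIUr (setIidPr Y1_x1) (disjoint_setI0 _) ?setU0 // disjoint_sym.
have x1_Y2 : x1 :&: Y2 = set0 by rewrite disjoint_setI0 // disjoint_sym.
have x1Uy : x1 :|: y = x1 :|: Y2 by rewrite setUA (setUidPl Y1_x1).
rewrite cardsD x1_y [#|~: _|]cardsCs setCK card_ord x1Uy cardsU x1_Y2 cards0 subn0.
rewrite card_x1 card_Y1 card_Y2 !mulr_natr.
have -> : (r - s + 1 + k = r - (s - k.+1))%N by lia.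
by rewrite subnDA.
Qed.

Theorem mainTheorem2 (n r s : nat) (Vr Ws : {vspace L2 n})
  (Lam : 'End(L2 n)) (lambda : nat -> algC) :
  (1 <= n)%N -> (r <= n)%N -> (s <= minn r (n - r))%N ->
  is_isotypic_component r s Vr ->
  is_isotypic_component s s Ws ->
  Lam != 0 ->
  (forall (g : {perm 'I_n}) psi, Lam (rho g psi) = rho g (Lam psi)) ->
  (Lam @: Vr <= Ws)%VS ->
  (forall psi, (forall v, v \in Vr -> dotL2 psi v = 0) -> Lam psi = 0) ->
  (forall psi, supported_on r psi ->
     forall x2 : {set 'I_n}, #|x2| = s ->
       Lam psi x2 = \sum_(x1 : {set 'I_n} | #|x1| == r)
                       lambda #|x2 :\: x1| * psi x1) ->
  forall k, (k <= s)%N ->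
    lambda k = (-1) ^+ k * (rising_factorial (r - s + 1) k)%:R
                 / ((n - r) ^_ k)%:R * lambda 0%N.
Proof.
move=> _ r_le_n s_le _ Ws_iso _ _ LVW L_orth L_kernel.
have s_le_nr : (s <= n - r)%N by move: s_le; rewrite leq_min => /andP [].
elim=> [|k IHk] k_lt_s.
  by rewrite /rising_factorial big_ord0 expr0 mul1r ffactn0 divr1 mul1r.
have := kernel_recurrence r_le_n s_le Ws_iso LVW L_orth L_kernel k_lt_s.
have nrk_neq0 : (n - r - k)%:R != 0 :> algC.
  by rewrite pnatr_eq0 -lt0n subn_gt0 (leq_trans k_lt_s).
have ffact_neq0 : ((n - r) ^_ k)%:R != 0 :> algC.
  by rewrite pnatr_eq0 -lt0n ffact_gt0 (leq_trans (ltnW k_lt_s)).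
move/eqP; rewrite addrC addr_eq0 => /eqP step.
apply: (mulIf nrk_neq0); rewrite step (IHk (ltnW k_lt_s)).
rewrite /rising_factorial big_ord_recr /= ffactnSr !natrM exprS.
by field; rewrite ffact_neq0 nrk_neq0.
Qed.
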